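(* On the set $\{(u,W):\|W\|_2^2\le B_W^2,\ u_i\le B_u \text{ for all } i\}$, the function $f(u,W)$ is strongly convex with strong convexity constant at least $\min\{\exp(-B_u),\mu\}$.
   Context: Data: $(y_i,x_i)$, $i=1,\dots,N$, $x_i\in\mathbb{R}^D$, $y_i\in\{1,\dots,K\}$, $K\ge 2$; $\mu>0$; $u\in\mathbb{R}^N$, $W=[w_1,\dots,w_K]\in\mathbb{R}^{D\times K}$ with Frobenius norm $\|W\|_2$; $$f(u,W)=\sum_{i=1}^N\Big[u_i+e^{-u_i}+\sum_{k\ne y_i}e^{x_i^\top(w_k-w_{y_i})-u_i}\Big]+\tfrac{\mu}{2}\|W\|_2^2.$$ $B_W^2=\frac{2}{\mu}N\log K$, $B_x=\max_i\|x_i\|_2$, $B_u=\log(1+(K-1)e^{2B_xB_W})$. *)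

From mathcomp Require Import all_boot all_order all_algebra.
From mathcomp Require Import all_classical all_reals all_analysis.
Set Implicit Arguments. Unset Strict Implicit. Unset Printing Implicit Defensive.
Import Order.TTheory GRing.Theory Num.Theory.
Local Open Scope ring_scope.

Section Defs.
Variables (R : realType) (N D K : nat).

(* data: x : 'I_N -> R^D (x i d = d-th coordinate of x_i), labels y : 'I_N -> 'I_K;
   W : D x K matrix whose k-th column is w_k *)

Definition margin (x : 'I_N -> 'I_D -> R) (y : 'I_N -> 'I_K)
  (W : 'M[R]_(D, K)) (i : 'I_N) (k : 'I_K) : R :=
  \sum_(d < D) x i d * (W d k - W d (y i)).

Definition frob2 (W : 'M[R]_(D, K)) : R := \sum_(d < D) \sum_(k < K) W d k ^+ 2.

Definition unorm2 (u : 'I_N -> R) : R := \sum_(i < N) u i ^+ 2.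

Definition f_obj (mu : R) (x : 'I_N -> 'I_D -> R) (y : 'I_N -> 'I_K)
  (u : 'I_N -> R) (W : 'M[R]_(D, K)) : R :=
  \sum_(i < N) (u i + expR (- u i)
      + \sum_(k < K | k != y i) expR (margin x y W i k - u i))
  + mu / 2 * frob2 W.

Definition BW2 (mu : R) : R := 2 / mu * N%:R * ln K%:R.
Definition BW (mu : R) : R := Num.sqrt (BW2 mu).
Definition Bx (x : 'I_N -> 'I_D -> R) : R :=
  \big[Num.max/0]_(i < N) Num.sqrt (\sum_(d < D) x i d ^+ 2).
Definition Bu (mu : R) (x : 'I_N -> 'I_D -> R) : R :=
  ln (1 + (K%:R - 1) * expR (2 * Bx x * BW mu)).

Definition feasible (mu : R) (x : 'I_N -> 'I_D -> R) (u : 'I_N -> R)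
  (W : 'M[R]_(D, K)) : Prop :=
  frob2 W <= BW2 mu /\ forall i, u i <= Bu mu x.

Definition strongly_convex_on (S : ('I_N -> R) -> 'M[R]_(D, K) -> Prop)
  (F : ('I_N -> R) -> 'M[R]_(D, K) -> R) (m : R) : Prop :=
  forall u1 W1 u2 W2 (t : R), S u1 W1 -> S u2 W2 -> 0 <= t <= 1 ->
    F (fun i => t * u1 i + (1 - t) * u2 i) (t *: W1 + (1 - t) *: W2)
    <= t * F u1 W1 + (1 - t) * F u2 W2
       - m / 2 * t * (1 - t) *
         (unorm2 (fun i => u1 i - u2 i) + frob2 (W1 - W2)).

End Defs.

(** The objective splits into three parts.  The terms [u_i] and
    [exp (x_i^T (w_k - w_{y_i}) - u_i)] are convex, being linear or the
    exponential of an affine function of [(u, W)].  The regulariser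
    [mu/2 ||W||^2] is exactly [mu]-strongly convex.  Finally
    [z |-> exp (-z)] is [exp (-B)]-strongly convex on [z <= B], because
    [exp (-z) = exp (-B) exp (B - z)] and [s |-> exp s - s^2/2] is convex on
    [s >= 0] (its second derivative is [exp s - 1 >= 0]).  Hence [f] is
    strongly convex with modulus [exp (-B_u)] in [u] and [mu] in [W]. *)

From mathcomp Require Import all_boot all_order all_algebra.
From mathcomp Require Import all_classical all_reals all_analysis.
From mathcomp Require Import ring lra.
Import Order.TTheory GRing.Theory Num.Theory numFieldNormedType.Exports.
Local Open Scope ring_scope.

Section ConvexReal.
Context {R : realType}.
Local Open Scope convex_scope.

Lemma convex_nonneg_second_derivative (f : R -> R^o) :
    (forall z, derivable f z 1) -> (forall z, derivable ('D_1 f) z 1) ->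
    (forall z, 0 < z -> 0 <= 'D_1 ('D_1 f) z) ->
  forall t a b, 0 <= t <= 1 -> 0 <= a -> 0 <= b ->
    f (t * a + (1 - t) * b) <= t * f a + (1 - t) * f b.
Proof.
move=> Df DDf DDf_ge0 t a b /andP[t0 t1].
have cf z : {for z, continuous f}.
  exact/differentiable_continuous/derivable1_diffP.
have convex_ab (c d : R^o) (s : {i01 R}) : 0 <= c -> c <= d ->
    f (c <| s |> d) <= f c <| s |> f d.
  move=> c0 cd; apply: second_derivative_convex => //.
  - by move=> z /andP[cz _]; apply: DDf_ge0; apply: le_lt_trans cz.
  - exact/cvg_at_left_filter/cf.
  - exact/cvg_at_right_filter/cf.
move=> a0 b0.
change (f ((a : R^o) <| Itv01 t0 t1 |> b) <= (f a : R^o) <| Itv01 t0 t1 |> f b).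
have [ab|/ltW ba] := leP a b; first exact: convex_ab.
by rewrite convC [leRHS]convC; apply: convex_ab.
Qed.

Lemma expR_convex (t a b : R) : 0 <= t <= 1 ->
  expR (t * a + (1 - t) * b) <= t * expR a + (1 - t) * expR b.
Proof. by case/andP=> t0 t1; have := convex_expR (Itv01 t0 t1) a b. Qed.

Let expR_sub_halfsq : R -> R^o := fun s => expR s - 2^-1 * (s * s).

Let expR_sub_halfsq_derive (s : R) :
  is_derive s 1 expR_sub_halfsq (expR s - s).
Proof.
have -> : expR_sub_halfsq = (expR : R -> R^o) - 2^-1 \*: (@id R^o * @id R^o).
  by apply/funext.
apply: is_derive_eq.
by rewrite /GRing.scale /= !mulr1; congr (_ - _); lra.
Qed.

Let expR_sub_halfsq_derive2 (s : R) :
  is_derive s 1 ('D_1 expR_sub_halfsq) (expR s - 1).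
Proof.
have -> : 'D_1 expR_sub_halfsq = (expR : R -> R^o) - @id R^o.
  apply/funext => z.
  by rewrite (@derive_val _ _ _ _ _ _ _ (expR_sub_halfsq_derive z)).
exact: is_derive_eq.
Qed.

Let expR_sub_halfsq_convex (t a b : R) : 0 <= t <= 1 -> 0 <= a -> 0 <= b ->
  expR_sub_halfsq (t * a + (1 - t) * b)
    <= t * expR_sub_halfsq a + (1 - t) * expR_sub_halfsq b.
Proof.
apply: convex_nonneg_second_derivative => [z|z|z z0].
- exact: ex_derive.
- exact: ex_derive.
- rewrite (@derive_val _ _ _ _ _ _ _ (expR_sub_halfsq_derive2 z)).
  by rewrite subr_ge0 -expR0 ler_expR ltW.
Qed.

Lemma expRN_strongly_convex (B t a b : R) : 0 <= t <= 1 -> a <= B -> b <= B ->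
  expR (- (t * a + (1 - t) * b))
    <= t * expR (- a) + (1 - t) * expR (- b)
       - expR (- B) / 2 * t * (1 - t) * (a - b) ^+ 2.
Proof.
move=> t01 aB bB.
have := expR_sub_halfsq_convex t (B - a) (B - b) t01.
rewrite !subr_ge0 => /(_ aB bB) /(ler_wpM2l (expR_ge0 (- B))).
have shift z : expR (- z) = expR (- B) * expR (B - z).
  by rewrite -expRD addrA addNr add0r.
rewrite (shift (t * a + _)) (shift a) (shift b).
have -> : B - (t * a + (1 - t) * b) = t * (B - a) + (1 - t) * (B - b) by ring.
by rewrite /expR_sub_halfsq; lra.
Qed.

End ConvexReal.

Section MulticlassLoss.
Context {R : realType} {N D K : nat}.
Variables (x : 'I_N -> 'I_D -> R) (y : 'I_N -> 'I_K).

Lemma frob2_ge0 (W : 'M[R]_(D, K)) : 0 <= frob2 W.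
Proof. by apply: sumr_ge0 => d _; apply: sumr_ge0 => k _; apply: sqr_ge0. Qed.

Lemma frob2_convex_combination (t : R) (W1 W2 : 'M[R]_(D, K)) :
  frob2 (t *: W1 + (1 - t) *: W2) =
  t * frob2 W1 + (1 - t) * frob2 W2 - t * (1 - t) * frob2 (W1 - W2).
Proof.
rewrite /frob2 !mulr_sumr -big_split -sumrB /=; apply: eq_bigr => d _.
rewrite !mulr_sumr -big_split -sumrB /=; apply: eq_bigr => k _.
by rewrite !mxE; ring.
Qed.

Lemma marginD (a b : R) (W1 W2 : 'M[R]_(D, K)) i k :
  margin x y (a *: W1 + b *: W2) i k =
  a * margin x y W1 i k + b * margin x y W2 i k.
Proof.
rewrite /margin !mulr_sumr -big_split /=; apply: eq_bigr => d _.
by rewrite !mxE; ring.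
Qed.

Definition sample_loss (u : 'I_N -> R) (W : 'M[R]_(D, K)) (i : 'I_N) : R :=
  u i + expR (- u i) + \sum_(k < K | k != y i) expR (margin x y W i k - u i).

Lemma f_objE mu u W :
  f_obj mu x y u W = \sum_(i < N) sample_loss u W i + mu / 2 * frob2 W.
Proof. by []. Qed.

Context {B t : R} {u1 u2 : 'I_N -> R} (W1 W2 : 'M[R]_(D, K)).
Hypotheses (t01 : 0 <= t <= 1) (u1B : forall i, u1 i <= B)
  (u2B : forall i, u2 i <= B).

Let u := fun i => t * u1 i + (1 - t) * u2 i.
Let W := t *: W1 + (1 - t) *: W2.

Lemma sample_loss_strongly_convex i :
  sample_loss u W i <= t * sample_loss u1 W1 i + (1 - t) * sample_loss u2 W2 i
                       - expR (- B) / 2 * t * (1 - t) * (u1 i - u2 i) ^+ 2.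
Proof.
have margin_terms :
    \sum_(k < K | k != y i) expR (margin x y W i k - u i)
    <= t * \sum_(k < K | k != y i) expR (margin x y W1 i k - u1 i)
       + (1 - t) * \sum_(k < K | k != y i) expR (margin x y W2 i k - u2 i).
  rewrite !mulr_sumr -big_split; apply: ler_sum => k _.
  rewrite marginD /u.
  have -> : t * margin x y W1 i k + (1 - t) * margin x y W2 i k
             - (t * u1 i + (1 - t) * u2 i)
          = t * (margin x y W1 i k - u1 i)
            + (1 - t) * (margin x y W2 i k - u2 i) by ring.
  exact: expR_convex.
have := expRN_strongly_convex B t (u1 i) (u2 i) t01 (u1B i) (u2B i).
by rewrite /sample_loss /u; lra.
Qed.

Lemma sum_sample_loss_strongly_convex :
  \sum_(i < N) sample_loss u W i
    <= t * \sum_(i < N) sample_loss u1 W1 i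
       + (1 - t) * \sum_(i < N) sample_loss u2 W2 i
       - expR (- B) / 2 * t * (1 - t) * unorm2 (fun i => u1 i - u2 i).
Proof.
rewrite /unorm2 !mulr_sumr -big_split -sumrB; apply: ler_sum => i _.
exact: sample_loss_strongly_convex.
Qed.

End MulticlassLoss.

Theorem lemma3 (R : realType) (N D K : nat) (hK : (2 <= K)%N) (mu : R)
  (hmu : 0 < mu) (x : 'I_N -> 'I_D -> R) (y : 'I_N -> 'I_K) :
  strongly_convex_on (feasible mu x) (f_obj mu x y)
    (Num.min (expR (- Bu K mu x)) mu).
Proof.
move=> u1 W1 u2 W2 t [_ u1B] [_ u2B] t01.
have := sum_sample_loss_strongly_convex x y W1 W2 t01 u1B u2B.
rewrite !f_objE frob2_convex_combination.
set L := \sum_(i < N) _; set L1 := \sum_(i < N) _; set L2 := \sum_(i < N) _.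
set c := expR (- Bu K mu x); set m := Num.min c mu.
set U := unorm2 _; set F := frob2 (W1 - W2).
have [t0 t1] := andP t01.
have tt_ge0 : 0 <= t * (1 - t) by apply: mulr_ge0; lra.
have mU : m * (t * (1 - t) * U) <= c * (t * (1 - t) * U).
  apply: ler_wpM2r; last by rewrite ge_min lexx.
  by apply: mulr_ge0 => //; apply: sumr_ge0 => i _; apply: sqr_ge0.
have mF : m * (t * (1 - t) * F) <= mu * (t * (1 - t) * F).
  apply: ler_wpM2r; last by rewrite ge_min lexx orbT.
  by apply: mulr_ge0 => //; apply: frob2_ge0.
by lra.
Qed.
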